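(* Let $G=(V,E)$ be a simple undirected graph with $n=|V|$ vertices and $m=|E|$ edges, let $b$ be a real number, and let $$\mathcal{P}_1=\Big\{(x,y)\in\mathbb{R}^m_{+}\times[0,1]^n:\ 1-y_u-y_v\le x_{uv}\ \text{for all } \{u,v\}\in E,\ \ \textstyle\sum_{v\in V}y_v\le b\Big\}.$$ If $b\ge 1$, then for every edge $\{u,v\}\in E$ the inequality $1-y_u-y_v\le x_{uv}$ is facet-defining for $\mathcal{P}_1$.
   Context: $x$ is indexed by edges and $y$ by vertices of $G$; $\mathcal{P}_1$ is the linear relaxation of the MIP formulation of the 1-hop distance-based critical node detection problem. An inequality is facet-defining if it is valid for $\mathcal{P}_1$ and the face it induces has dimension $\dim\mathcal{P}_1-1$. *)

From HB Require Import structures.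
From mathcomp Require Import all_boot all_order all_algebra.
From mathcomp Require Import reals.
Set Implicit Arguments. Unset Strict Implicit. Unset Printing Implicit Defensive.
Import Order.TTheory GRing.Theory Num.Theory.
Local Open Scope ring_scope.

Definition simple_graph (V : finType) (E : {set {set V}}) : Prop :=
  forall s, s \in E -> #|s| = 2%N.

Notation edge E := {s : {set _} | s \in E}.

Notation point R E := ({ffun edge E -> R^o} * {ffun _ -> R^o})%type.

Definition aff_indep (R : fieldType) (vT : vectType R) (k : nat)
    (P : 'I_k.+1 -> vT) : bool :=
  free [seq P (lift ord0 i) - P ord0 | i <- enum 'I_k].

(* S has affine dimension d (d = -1 iff S is empty): S contains k+1
   affinely independent points iff k <= d. *)
Definition is_affdim (R : fieldType) (vT : vectType R) (S : vT -> Prop)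
    (d : int) : Prop :=
  (-1 <= d) /\
  forall k : nat,
    (exists P : 'I_k.+1 -> vT, (forall i, S (P i)) /\ aff_indep P)
    <-> (k%:Z <= d).

Definition facet_defining (R : realFieldType) (vT : vectType R)
    (S : vT -> Prop) (f : vT -> R) (beta : R) : Prop :=
  (forall p, S p -> f p <= beta) /\
  exists d : int, is_affdim S d /\
    is_affdim (fun p => S p /\ f p = beta) (d - 1).

Definition P1 (R : realType) (V : finType) (E : {set {set V}}) (b : R)
    (p : ({ffun edge E -> R^o} * {ffun V -> R^o})%type) : Prop :=
  let x := p.1 in let y := p.2 in
  (forall e : edge E, 0 <= x e) /\
  (forall v : V, 0 <= y v <= 1) /\
  (forall (e : edge E) (u v : V), val e = [set u; v] -> 1 - y u - y v <= x e) /\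
  (\sum_(v : V) y v <= b).

(** Let [phi p = y_u + y_v + x_e] and let [p0] be the point with all
    [y = c := 1/(4n)], [x_e = 1 - 2c] and every other [x = 1].  All the
    constraints of P_1 except the one of [e] hold strictly at [p0], and
    [phi p0 = 1]; so moving from [p0] a little along any direction of the
    hyperplane [phi = 0] stays in the face, while from [p0] with [x_e] raised
    by 1 one may move a little in every direction and stay in P_1.  A set that
    lies in [p + U] and contains a small nonzero step from [p] along each
    direction of the subspace [U] has affine dimension [dim U]; hence P_1 is
    full-dimensional and the face, which spans the hyperplane, has dimension
    one less. *)
From HB Require Import structures.
From mathcomp Require Import all_boot all_order all_algebra.
From mathcomp Require Import reals zify ring lra.
Set Implicit Arguments. Unset Strict Implicit. Unset Printing Implicit Defensive.
Import Order.TTheory GRing.Theory Num.Theory.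
Local Open Scope ring_scope.

Section AffineDimension.
Variables (K : fieldType) (W : vectType K).

Lemma aff_indep_dimv k (P : 'I_k.+1 -> W) (U : {vspace W}) :
  aff_indep P -> (forall i, P (lift ord0 i) - P ord0 \in U) -> (k <= \dim U)%N.
Proof.
rewrite /aff_indep /free size_map size_enum_ord /= => /eqP dim_k PU.
by rewrite -{1}dim_k; apply/dimvS/span_subvP => _ /mapP[i _ ->].
Qed.

Lemma aff_indep_of_free (S : W -> Prop) (p : W) (s : seq W) :
  S p -> (forall w, w \in s -> S (p + w)) -> free s ->
  forall k, (k <= size s)%N ->
  exists P : 'I_k.+1 -> W, (forall i, S (P i)) /\ aff_indep P.
Proof.
move=> Sp Ss free_s k le_ks.
have size_s' : size (take k s) = k by rewrite size_takel.
exists (fun i => p + nth 0 (0 :: take k s) i); split.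
  case=> [[|i] lt_i] /=; first by rewrite addr0.
  by apply/Ss/(mem_take (n0 := k))/mem_nth; rewrite size_s'.
rewrite /aff_indep /= addr0.
have -> : [seq p + nth 0 (0 :: take k s) (lift ord0 i) - p | i <- enum 'I_k]
          = take k s.
  rewrite -{2}(mkseq_nth 0 (take k s)) size_s' /mkseq -val_enum_ord -map_comp.
  by apply/eq_map => i /=; rewrite addrC addKr.
by rewrite -(cat_take_drop k s) in free_s; apply: catl_free free_s.
Qed.

Lemma free_scaled (G : W -> Prop) (l : seq W) :
  free l -> (forall x, x \in l -> exists2 t, t != 0 & G (t *: x)) ->
  exists s, [/\ free s, size s = size l, {subset s <= <<l>>%VS}
              & forall w, w \in s -> G w].
Proof.
elim: l => [|x l IHl]; first by exists [::]; split; rewrite ?nil_free.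
rewrite free_cons => /andP[x_notin free_l] Gl.
have [s [free_s size_s s_sub Gs]] : exists s, [/\ free s, size s = size l,
    {subset s <= <<l>>%VS} & forall w, w \in s -> G w].
  by apply: IHl free_l _ => y ly; apply: Gl; rewrite inE ly orbT.
have [t t_neq0 Gtx] := Gl x (mem_head x l).
have l_sub : (<<l>> <= <<x :: l>>)%VS by rewrite span_cons addvSr.
exists (t *: x :: s); split => /=.
- rewrite free_cons free_s andbT; apply: contra x_notin => tx_in.
  rewrite -(scalerK t_neq0 x) memvZ //.
  by move: tx_in; apply/subvP/span_subvP.
- by rewrite size_s.
- move=> y; rewrite inE => /predU1P[->|/s_sub/(subvP l_sub)//].
  by rewrite memvZ // memv_span ?mem_head.
- by move=> y; rewrite inE => /predU1P[->|/Gs].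
Qed.

Lemma is_affdim_dimv (S : W -> Prop) (U : {vspace W}) (p : W) :
  (forall q, S q -> q - p \in U) ->
  (forall w, w \in U -> exists2 t, t != 0 & S (p + t *: w)) ->
  is_affdim S (\dim U)%:Z.
Proof.
move=> SU US; split=> // k; rewrite lez_nat; split.
  case=> P [SP indepP]; apply: aff_indep_dimv indepP _ => i.
  have -> : P (lift ord0 i) - P ord0 = (P (lift ord0 i) - p) - (P ord0 - p).
    by rewrite opprB addrA subrK.
  by rewrite memvB ?SU.
have [t _ Sp] := US 0 (mem0v U); rewrite scaler0 addr0 in Sp.
have [s [free_s size_s _ Gs]] :=
  @free_scaled (fun w => S (p + w)) _ (basis_free (vbasisP U))
    (fun x xB => US x (vbasis_mem xB)).
rewrite size_tuple in size_s.
by rewrite -size_s; exact: aff_indep_of_free Sp Gs free_s k.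
Qed.

Lemma dim_lker_form (f : 'Hom(W, K^o)) (x : W) :
  f x != 0 -> (\dim (lker f)).+1 = \dim {:W}.
Proof.
move=> fx_neq0; rewrite -(limg_ker_dim f fullv) capfv -addn1; congr (_ + _)%N.
apply/eqP; rewrite eqn_leq; apply/andP; split.
  rewrite lt0n dimv_eq0; apply: contraNneq fx_neq0 => img0.
  by rewrite -memv0 -img0 memv_img ?memvf.
by apply: leq_trans (dimvS (subvf _)) _; rewrite dimvf.
Qed.

End AffineDimension.

Lemma exists_small_multiple (R : realFieldType) (I : finType) (f : I -> R) (d : R) :
  0 < d -> exists2 t, 0 < t & forall i, `|t * f i| <= d.
Proof.
move=> d_gt0; set M := 1 + \sum_i `|f i|.
have M_gt0 : 0 < M by rewrite /M ltr_pwDl ?sumr_ge0.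
exists (d / M) => [|i]; first by rewrite divr_gt0.
rewrite normrM gtr0_norm ?divr_gt0 // -{2}(divfK (lt0r_neq0 M_gt0) d).
apply: ler_wpM2l; first by rewrite divr_ge0 ?ltW.
by rewrite /M (bigD1 i) //= addrCA lerDl addr_ge0 ?sumr_ge0.
Qed.

Lemma addr_set2 (T : finType) (M : nmodType) (f : T -> M) (a c u v : T) :
  u != v -> [set a; c] = [set u; v] -> f a + f c = f u + f v.
Proof.
have sum2 x y : x != y -> \sum_(i in [set x; y]) f i = f x + f y.
  by move=> xy; rewrite big_setU1 ?big_set1 // inE.
move=> uv acuv; have ac : a != c.
  apply: contraNneq uv => ac.
  have := cards2 u v; rewrite -acuv ac setUid cards1.
  by case: eqP.
by rewrite -sum2 // acuv sum2.
Qed.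

Section EdgeFacet.
Variables (R : realType) (V : finType) (E : {set {set V}}) (b : R).
Variables (e : edge E) (u v : V).
Hypotheses (he : val e = [set u; v]) (uv : u != v).

Local Notation pt := ({ffun edge E -> R^o} * {ffun V -> R^o})%type.

Definition edge_form (p : pt) : R^o := p.2 u + p.2 v + p.1 e.

Lemma edge_form_is_linear : linear edge_form.
Proof. by move=> a p q; rewrite /edge_form /= !ffunE /GRing.scale /=; ring. Qed.

HB.instance Definition _ :=
  GRing.isLinear.Build R pt R^o *:%R edge_form edge_form_is_linear.

Let c : R := (4 * #|V|%:R)^-1.

Let sum_c : \sum_(a : V) c = 1 / 4.
Proof.
have n_gt0 : (0 < #|V|)%N by apply/card_gt0P; exists u.
rewrite sumr_const -mulr_natr /c; field.
by rewrite pnatr_eq0 -lt0n.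
Qed.

Let c_bounds : 0 < c <= 1 / 4.
Proof.
have c_gt0 : 0 < c by rewrite invr_gt0 mulr_gt0 // ltr0n; apply/card_gt0P; exists u.
rewrite c_gt0 -sum_c (bigD1 u) //= lerDl sumr_ge0 // => a _.
exact: ltW.
Qed.

Definition base : pt := ([ffun e' => if e' == e then 1 - 2 * c else 1], [ffun=> c]).

Definition unit_e : pt := ([ffun e' => (e' == e)%:R], 0).

Lemma edge_form_base : edge_form base = 1.
Proof. by rewrite /edge_form !ffunE eqxx; ring. Qed.

Lemma edge_form_unit_e : edge_form unit_e = 1.
Proof. by rewrite /edge_form !ffunE eqxx !add0r. Qed.

Lemma P1_perturb (s t : R) (w : pt) : 1 <= b -> 0 <= s ->
  (forall e', `|t * w.1 e'| <= c / 4) -> (forall a, `|t * w.2 a| <= c / 4) ->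
  0 <= s + t * edge_form w -> P1 b (base + s *: unit_e + t *: w).
Proof.
move=> hb s_ge0 small_x small_y tw_ge0; have /andP[c_gt0 c_le] := c_bounds.
have {small_x}small_x e' : - (c / 4) <= t * w.1 e' <= c / 4 by rewrite -ler_norml.
have {small_y}small_y a : - (c / 4) <= t * w.2 a <= c / 4 by rewrite -ler_norml.
rewrite /P1 /=; split; [|split; [|split]].
- move=> e'; rewrite !ffunE /GRing.scale /=.
  have /andP[? ?] := small_x e'; case: (e' == e) => /=; lra.
- move=> a; rewrite !ffunE /GRing.scale /= mulr0 addr0.
  have /andP[? ?] := small_y a; apply/andP; split; lra.
- move=> e' a a' e'_aa'; rewrite !ffunE /GRing.scale /= !mulr0 !addr0.
  have /andP[? ?] := small_x e'.
  have /andP[? ?] := small_y a; have /andP[? ?] := small_y a'.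
  case: eqP e'_aa' => [-> e_aa' | _ _] /=; last by lra.
  have := addr_set2 (fun z => t * w.2 z) uv (etrans (esym e_aa') he).
  by move: tw_ge0; rewrite /edge_form !mulrDr /=; lra.
- have -> : \sum_a ([ffun=> c] + s *: (0 : {ffun V -> R^o}) + t *: w.2) a
            = (1 / 4 + \sum_a t * w.2 a : R).
    rewrite -sum_c -big_split; apply: eq_bigr => a _.
    by rewrite !ffunE /GRing.scale /= mulr0 addr0.
  have : \sum_a t * w.2 a <= \sum_(a : V) c / 4.
    by apply: ler_sum => a _; case/andP: (small_y a).
  rewrite -mulr_suml sum_c => sum_le.
  by apply: le_trans (lerD (lexx (1 / 4)) sum_le) _; lra.
Qed.

Lemma small_multiple (w : pt) : exists2 t : R, t != 0 &
  (forall e', `|t * w.1 e'| <= c / 4) /\ (forall a, `|t * w.2 a| <= c / 4).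
Proof.
have /andP[c_gt0 _] := c_bounds.
have [|t t_gt0 small] := exists_small_multiple
  (fun i : edge E + V => match i with inl e' => w.1 e' | inr a => w.2 a end)
  (d := c / 4); first by rewrite divr_gt0.
exists t; first by rewrite gt_eqF.
by split=> [e'|a]; [exact: small (inl e') | exact: small (inr a)].
Qed.

Lemma is_affdim_P1 : 1 <= b -> is_affdim (@P1 R V E b) (\dim {:pt})%:Z.
Proof.
move=> hb; apply: (is_affdim_dimv (p := base + unit_e)) => [q _ | w _].
  exact: memvf.
have [t t_neq0 [small_x small_y]] := small_multiple w.
exists t => //; rewrite -[unit_e]scale1r.
apply: P1_perturb => //; have /andP[_ c_le] := c_bounds.
have := lerNnormlW (small_y u); have := lerNnormlW (small_y v).
have := lerNnormlW (small_x e).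
rewrite /edge_form !mulrDr; lra.
Qed.

Lemma is_affdim_edge_face : 1 <= b ->
  is_affdim (fun q : pt => P1 b q /\ 1 - q.2 u - q.2 v - q.1 e = 0)
    ((\dim {:pt})%:Z - 1).
Proof.
move=> hb.
have dim_face : (\dim (lker (linfun edge_form))).+1 = \dim {:pt}.
  apply: (dim_lker_form (x := unit_e)).
  by rewrite lfunE /= edge_form_unit_e oner_eq0.
have -> : (\dim {:pt})%:Z - 1 = \dim (lker (linfun edge_form)) by rewrite -dim_face; lia.
apply: (is_affdim_dimv (p := base)) => [q [_ face_q] | w].
  rewrite memv_ker lfunE linearB /= edge_form_base subr_eq0; apply/eqP.
  by move: face_q; rewrite /edge_form; lra.
rewrite memv_ker lfunE => /eqP form_w.
have [t t_neq0 [small_x small_y]] := small_multiple w.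
exists t => //; split.
  have := P1_perturb hb (lexx 0) small_x small_y.
  by rewrite form_w mulr0 addr0 scale0r addr0; apply.
have : t * edge_form w = 0 by rewrite form_w mulr0.
rewrite /edge_form /= !ffunE /GRing.scale /= eqxx !mulrDr; lra.
Qed.

End EdgeFacet.

Theorem proposition3 (R : realType) (V : finType) (E : {set {set V}})
  (hG : simple_graph E) (b : R) (hb : 1 <= b)
  (e : edge E) (u v : V) (he : val e = [set u; v]) :
  facet_defining (@P1 R V E b)
    (fun p : point R E => 1 - p.2 u - p.2 v - p.1 e) 0.
Proof.
have uv : u != v by have := hG _ (valP e); rewrite he cards2; case: (u != v).
split=> [p [_ [_ [edge_p _]]] | ]; first by have := edge_p e u v he; lra.
by eexists; split; [exact: is_affdim_P1 he uv hb | exact: is_affdim_edge_face].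
Qed.
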